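(* For every cwf $\mathcal C$, the assignment $\Gamma\mapsto\mathrm{Pr}^\wedge_{\mathcal C}(\Gamma)$ described below is a functor from $\mathcal C^{\mathrm{op}}$ to the category of lower semilattices (preorders with a top element and binary meets, with maps preserving order, top and meets); that is, $(\mathcal C,\mathrm{Pr}^\wedge_{\mathcal C})$ is a cwf with Horn doctrine. In particular, $\le_\Gamma$ is a preorder on $\mathrm{F}(\Gamma)$, $\langle\rangle$ is a top element, concatenation is a binary meet, and each $f:\Delta\to\Gamma$ induces a map preserving $\le$, $\top$ and $\wedge$.
   Context: A category with families (cwf) consists of: a category $\mathcal C$ with a terminal object $\top$; for each object $\Gamma$ a class $\mathrm{Ty}(\Gamma)$, and for $f:\Delta\to\Gamma$ a function $A\mapsto A\{f\}:\mathrm{Ty}(\Gamma)\to\mathrm{Ty}(\Delta)$ with $A\{1\}=A$, $A\{f\circ g\}=A\{f\}\{g\}$; for $A\in\mathrm{Ty}(\Gamma)$ an object $\Gamma.A$ and a morphism $\mathrm{p}(A)=\mathrm{p}_\Gamma(A):\Gamma.A\to\Gamma$; for $A\in\mathrm{Ty}(\Gamma)$ a class $\mathrm{Tm}(\Gamma,A)$ and for $f:\Delta\to\Gamma$ a function $a\mapsto a\{f\}:\mathrm{Tm}(\Gamma,A)\to\mathrm{Tm}(\Delta,A\{f\})$ with $a\{1\}=a$, $a\{f\circ g\}=a\{f\}\{g\}$; for each $A\in\mathrm{Ty}(\Gamma)$ an element $\mathrm{v}_A\in\mathrm{Tm}(\Gamma.A,A\{\mathrm{p}(A)\})$; for $f:\Delta\to\Gamma$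 and $a\in\mathrm{Tm}(\Delta,A\{f\})$ a morphism $\langle f,a\rangle_A:\Delta\to\Gamma.A$ such that $\mathrm{p}(A)\circ\langle f,a\rangle_A=f$, $\mathrm{v}_A\{\langle f,a\rangle_A\}=a$, $\langle\mathrm{p}(A)\circ h,\mathrm{v}_A\{h\}\rangle_A=h$ for every $h:\Delta\to\Gamma.A$, and $\langle f,a\rangle_A\circ g=\langle f\circ g,a\{g\}\rangle_A$. Notation: $\mathrm{p}^{(0)}=\mathrm{id}$ and $\mathrm{p}^{(k)}$ is the composite of the $k$ last canonical projections, so that for $A_1,\ldots,A_n\in\mathrm{Ty}(\Gamma)$ the object $\Gamma.A_1.A_2\{\mathrm p\}.\cdots.A_n\{\mathrm p^{(n-1)}\}$ is formed by successively extending $\Gamma$ by each $A_k$ pulled back along the composite $\mathrm{p}^{(k-1)}$ of the projections down to $\Gamma$, and $\mathrm{p}^{(n)}$ is its projection to $\Gamma$. $\mathrm{F}(\Gamma)$ is the set of finite sequences $\langle A_1,\ldots,A_n\rangle$ of elements of $\mathrm{Ty}(\Gamma)$, with $\langle A_1,\ldots,A_n\rangle\le_\Gamma\langle B_1,\ldots,B_m\rangle$ iff for every $k=1,\ldots,m$ the class $\mathrm{Tm}(\Gamma.A_1.A_2\{\mathrm p\}.\cdots.A_n\{\mathrm p^{(n-1)}\},B_k\{\mathrm p^{(n)}\})$ is inhabited. $\mathrm{Pr}^\wedge_{\mathcal C}(\Gamma)=(\mathrm F(\Gamma),\le_\Gamma)$ with $\top_\Gamma=\langle\rangle$ and $\langle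 A_1,\ldots,A_n\rangle\wedge_\Gamma\langle B_1,\ldots,B_m\rangle=\langle A_1,\ldots,A_n,B_1,\ldots,B_m\rangle$, and for $f:\Delta\to\Gamma$, $\langle A_1,\ldots,A_n\rangle\{f\}=\langle A_1\{f\},\ldots,A_n\{f\}\rangle$. *)

From Stdlib Require Import List.
Import ListNotations.
Set Implicit Arguments.

Record cwf : Type := {
  Ob : Type;
  Hom : Ob -> Ob -> Type;                    (* Hom D G = morphisms D -> G *)
  idm : forall G : Ob, Hom G G;
  comp : forall G D E : Ob, Hom D G -> Hom E D -> Hom E G;
  comp_id_l : forall G D (f : Hom D G), comp (idm G) f = f;
  comp_id_r : forall G D (f : Hom D G), comp f (idm D) = f;
  comp_assoc : forall G D E F (f : Hom D G) (g : Hom E D) (h : Hom F E),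
      comp f (comp g h) = comp (comp f g) h;
  trm : Ob;
  bang : forall G, Hom G trm;
  bang_uniq : forall G (f : Hom G trm), f = bang G;
  Ty : Ob -> Type;
  tsub : forall G D, Hom D G -> Ty G -> Ty D;
  tsub_id : forall G (A : Ty G), tsub (idm G) A = A;
  tsub_comp : forall G D E (f : Hom D G) (g : Hom E D) (A : Ty G),
      tsub (comp f g) A = tsub g (tsub f A);
  ext : forall G, Ty G -> Ob;
  pr : forall G (A : Ty G), Hom (ext A) G;
  Tm : forall G, Ty G -> Type;
  msub : forall G D (f : Hom D G) (A : Ty G), Tm A -> Tm (tsub f A);
  msub_id : forall G (A : Ty G) (a : Tm A),
      eq_rect _ (@Tm G) (msub (idm G) a) A (tsub_id A) = a;
  msub_comp : forall G D E (f : Hom D G) (g : Hom E D) (A : Ty G) (a : Tm A),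
      eq_rect _ (@Tm E) (msub (comp f g) a) _ (tsub_comp f g A)
      = msub g (msub f a);
  vr : forall G (A : Ty G), Tm (tsub (pr A) A);
  pair : forall G D (A : Ty G) (f : Hom D G), Tm (tsub f A) -> Hom D (ext A);
  pr_pair : forall G D (A : Ty G) (f : Hom D G) (a : Tm (tsub f A)),
      comp (pr A) (pair a) = f;
  vr_pair : forall G D (A : Ty G) (f : Hom D G) (a : Tm (tsub f A)),
      eq_rect _ (@Tm D) (msub (pair a) (vr A)) (tsub f A)
        (eq_trans (eq_sym (tsub_comp (pr A) (pair a) A))
                  (f_equal (fun h => tsub h A) (pr_pair a))) = a;
  pair_eta : forall G D (A : Ty G) (h : Hom D (ext A)),
      pair (A:=A) (f:=comp (pr A) h)
        (eq_rect _ (@Tm D) (msub h (vr A)) _ (eq_sym (tsub_comp (pr A) h A)))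
      = h;
  pair_comp : forall G D E (A : Ty G) (f : Hom D G) (a : Tm (tsub f A))
      (g : Hom E D),
      comp (pair a) g
      = pair (A:=A) (f:=comp f g) (eq_rect _ (@Tm E) (msub g a) _ (eq_sym (tsub_comp f g A)))
}.

Arguments idm {c} G.
Arguments comp {c G D E} f g.
Arguments tsub {c G D} f A.
Arguments ext {c G} A.
Arguments pr {c G} A.
Arguments Tm {c G} A.

Section Horn.
Variable C : cwf.

(* Iterated extension Gamma.A1.A2{p}...An{p^(n-1)} together with its
   projection p^(n) to Gamma (p^(0) = id, p^(k+1) = p^(k) o p). *)
Definition ctx_ext_step (G : Ob C) (Dq : {D : Ob C & Hom C D G}) (A : Ty C G)
  : {D : Ob C & Hom C D G} :=
  existT (fun D => Hom C D G) (ext (tsub (projT2 Dq) A)) (comp (projT2 Dq) (pr (tsub (projT2 Dq) A))).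

Definition ctx_ext_full (G : Ob C) (l : list (Ty C G)) : {D : Ob C & Hom C D G} :=
  fold_left (@ctx_ext_step G) l (existT (fun D => Hom C D G) G (idm G)).

Definition ctxE (G : Ob C) (l : list (Ty C G)) : Ob C := projT1 (ctx_ext_full G l).
Definition ctxP (G : Ob C) (l : list (Ty C G)) : Hom C (ctxE G l) G :=
  projT2 (ctx_ext_full G l).

(* F(Gamma) = list (Ty Gamma); the order <=_Gamma *)
Definition leF (G : Ob C) (l m : list (Ty C G)) : Prop :=
  Forall (fun B => inhabited (Tm (tsub (ctxP G l) B))) m.

Definition topF (G : Ob C) : list (Ty C G) := [].
Definition meetF (G : Ob C) (l m : list (Ty C G)) : list (Ty C G) := l ++ m.
Definition substF (G D : Ob C) (f : Hom C D G) (l : list (Ty C G)) : list (Ty C D) :=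
  map (tsub f) l.

End Horn.

Arguments ctxE {C G} l.
Arguments ctxP {C G} l.
Arguments leF {C G} l m.
Arguments topF {C} G.
Arguments meetF {C G} l m.
Arguments substF {C G D} f l.

(* The universal
   property of context extension turns this into a factorisation: leF l m holds
   iff ctxP l factors through ctxP m.  Reflexivity and the meet laws follow from
   the variables v_A of the extension, transitivity from composing
   factorisations, and monotonicity of substitution along f from factoring
   f o ctxP (l{f}) through ctxP l.  The equations for substitution are those of
   [map] on lists, using that types are functorial in the context. *)

From Stdlib Require Import List.
Import ListNotations.
Set Implicit Arguments.
Unset Strict Implicit.

Section HornDoctrine.
Variable C : cwf.

Definition holds (G D : Ob C) (k : Hom C D G) (B : Ty C G) : Prop :=
  inhabited (Tm (tsub k B)).

Lemma holds_comp G D E (g : Hom C D G) (h : Hom C E D) (B : Ty C G) :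
  holds g B -> holds (comp g h) B.
Proof.
  intros [b]. unfold holds. rewrite tsub_comp. exact (inhabits (msub _ _ _ h _ b)).
Qed.

Lemma Forall_holds_comp G D E (g : Hom C D G) (h : Hom C E D) (m : list (Ty C G)) :
  Forall (holds g) m -> Forall (holds (comp g h)) m.
Proof. apply Forall_impl. intros B. apply holds_comp. Qed.

Lemma holds_tsub G D E (f : Hom C D G) (k : Hom C E D) (B : Ty C G) :
  holds k (tsub f B) <-> holds (comp f k) B.
Proof. unfold holds. rewrite tsub_comp. reflexivity. Qed.

Lemma ctx_ext_full_app G (l m : list (Ty C G)) :
  ctx_ext_full C G (l ++ m) = fold_left (@ctx_ext_step C G) m (ctx_ext_full C G l).
Proof. apply fold_left_app. Qed.

Lemma fold_ctx_ext_step_factor G (m : list (Ty C G)) :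
  forall Dq : {D : Ob C & Hom C D G},
  exists h : Hom C (projT1 (fold_left (@ctx_ext_step C G) m Dq)) (projT1 Dq),
    comp (projT2 Dq) h = projT2 (fold_left (@ctx_ext_step C G) m Dq).
Proof.
  induction m as [|A m IH]; intros [D q]; simpl.
  - exists (idm D). apply comp_id_r.
  - destruct (IH (ctx_ext_step C G (existT _ D q) A)) as [h Hh]. simpl in *.
    exists (comp (pr (tsub q A)) h). rewrite comp_assoc. exact Hh.
Qed.

Lemma ctxP_app_factor G (l m : list (Ty C G)) :
  exists h : Hom C (ctxE (l ++ m)) (ctxE l), comp (ctxP l) h = ctxP (l ++ m).
Proof.
  unfold ctxE, ctxP. rewrite ctx_ext_full_app.
  apply fold_ctx_ext_step_factor.
Qed.

Lemma holds_ctxP_last G (l : list (Ty C G)) (A : Ty C G) :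
  holds (ctxP (l ++ [A])) A.
Proof.
  unfold holds, ctxP, ctxE. rewrite ctx_ext_full_app. simpl.
  rewrite tsub_comp. exact (inhabits (vr _ _ _)).
Qed.

Lemma holds_ctxP_in G (l : list (Ty C G)) (B : Ty C G) :
  In B l -> holds (ctxP l) B.
Proof.
  intros HB. destruct (in_split _ _ HB) as [l1 [l2 ->]].
  replace (l1 ++ B :: l2) with ((l1 ++ [B]) ++ l2) by (rewrite <- app_assoc; reflexivity).
  destruct (ctxP_app_factor (l1 ++ [B]) l2) as [h <-].
  apply holds_comp, holds_ctxP_last.
Qed.

(* The universal property of context extension, iterated along m. *)
Lemma ctxP_factor G (m : list (Ty C G)) E (k : Hom C E G) :
  Forall (holds k) m -> exists h : Hom C E (ctxE m), comp (ctxP m) h = k.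
Proof.
  induction m as [|A m IH] using rev_ind; intros Hm.
  - exists k. apply comp_id_l.
  - apply Forall_app in Hm as [Hm [a] %Forall_inv].
    destruct (IH Hm) as [h Hh].
    unfold ctxE, ctxP. rewrite ctx_ext_full_app. simpl. fold (ctxE m) (ctxP m).
    assert (a' : Tm (tsub h (tsub (ctxP m) A))) by (rewrite <- tsub_comp, Hh; exact a).
    exists (pair _ _ _ _ h a'). rewrite <- comp_assoc, pr_pair. exact Hh.
Qed.

Lemma leF_refl G (l : list (Ty C G)) : leF l l.
Proof. apply Forall_forall. intros B. apply holds_ctxP_in. Qed.

Lemma leF_trans G (l m n : list (Ty C G)) : leF l m -> leF m n -> leF l n.
Proof.
  intros Hlm Hmn. destruct (ctxP_factor Hlm) as [h Hh].
  unfold leF. rewrite <- Hh. exact (Forall_holds_comp h Hmn).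
Qed.

Lemma leF_top G (l : list (Ty C G)) : leF l (topF G).
Proof. constructor. Qed.

Lemma leF_meet_l G (l m : list (Ty C G)) : leF (meetF l m) l.
Proof.
  apply Forall_forall. intros B HB. apply holds_ctxP_in, in_or_app. now left.
Qed.

Lemma leF_meet_r G (l m : list (Ty C G)) : leF (meetF l m) m.
Proof.
  apply Forall_forall. intros B HB. apply holds_ctxP_in, in_or_app. now right.
Qed.

Lemma leF_meet G (k l m : list (Ty C G)) : leF k l -> leF k m -> leF k (meetF l m).
Proof. intros Hl Hm. now apply Forall_app. Qed.

Lemma leF_substF G D (f : Hom C D G) (l m : list (Ty C G)) :
  leF l m -> leF (substF f l) (substF f m).
Proof.
  intros Hlm.
  assert (Hl : Forall (holds (comp f (ctxP (substF f l)))) l).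
  { apply Forall_forall. intros B HB. apply holds_tsub, holds_ctxP_in, in_map, HB. }
  destruct (ctxP_factor Hl) as [h Hh].
  apply Forall_map, (Forall_impl _ (fun B => proj2 (holds_tsub f _ B))).
  rewrite <- Hh. exact (Forall_holds_comp h Hlm).
Qed.

Lemma substF_id G (l : list (Ty C G)) : substF (idm G) l = l.
Proof. rewrite <- (map_id l) at 2. apply map_ext, tsub_id. Qed.

Lemma substF_comp G D E (f : Hom C D G) (g : Hom C E D) (l : list (Ty C G)) :
  substF (comp f g) l = substF g (substF f l).
Proof. unfold substF. rewrite map_map. apply map_ext, tsub_comp. Qed.

End HornDoctrine.

Theorem mainTheorem16 (C : cwf) :
  (* each Pr(Gamma) is a lower semilattice *)
  (forall G (l : list (Ty C G)), leF l l) /\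
  (forall G (l m n : list (Ty C G)), leF l m -> leF m n -> leF l n) /\
  (forall G (l : list (Ty C G)), leF l (topF G)) /\
  (forall G (l m : list (Ty C G)), leF (meetF l m) l) /\
  (forall G (l m : list (Ty C G)), leF (meetF l m) m) /\
  (forall G (k l m : list (Ty C G)), leF k l -> leF k m -> leF k (meetF l m)) /\
  (* each f : Delta -> Gamma induces a morphism of lower semilattices *)
  (forall G D (f : Hom C D G) (l m : list (Ty C G)),
      leF l m -> leF (substF f l) (substF f m)) /\
  (forall G D (f : Hom C D G), substF f (topF G) = topF D) /\
  (forall G D (f : Hom C D G) (l m : list (Ty C G)),
      substF f (meetF l m) = meetF (substF f l) (substF f m)) /\
  (* functoriality (contravariant) *)
  (forall G (l : list (Ty C G)), substF (idm G) l = l) /\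
  (forall G D E (f : Hom C D G) (g : Hom C E D) (l : list (Ty C G)),
      substF (comp f g) l = substF g (substF f l)).
Proof.
  repeat split.
  - apply leF_refl.
  - apply leF_trans.
  - apply leF_top.
  - apply leF_meet_l.
  - apply leF_meet_r.
  - apply leF_meet.
  - apply leF_substF.
  - intros G D f l m. apply map_app.
  - apply substF_id.
  - apply substF_comp.
Qed.
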